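(* Let $(\lambda_1,v)$ be a real eigenpair of the $n\times n$ real matrix $A=[a_{ij}]$, with every component of $v$ nonzero. Let $S=\mathrm{diag}(v)$ and $B=[b_{ij}]=S^{-1}AS$. If $\lambda$ is an eigenvalue of $A$ different from $\lambda_1$, then $$|\lambda|\le\max_{1\le i\le n}\{|a_{ii}|+\hat r_i(B)\}.$$ Moreover: (1) If $n$ is even and $F=[f_{ij}]=[b_{ij}-\beta_j]$, where $\beta_j$ is the $(n/2)$-th largest element among $b_{1j},\dots,b_{j-1,j},b_{j+1,j},\dots,b_{nj}$, then $|\lambda|\le\max_{1\le i\le n}\{|f_{ii}|+\hat r_i(F)\}$. (2) If $n$ is odd with $n\ge 3$, and $F=[f_{ij}]=[b_{ij}+\beta_j]$, $G=[g_{ij}]=[b_{ij}+\gamma_j]$, where $\beta_j$ and $\gamma_j$ are, respectively, the negatives of the $\frac{n-1}{2}$-th and the $\frac{n+1}{2}$-th largest numbers among $b_{1j},\dots,b_{j-1,j},b_{j+1,j},\dots,b_{nj}$, then $$|\lambda|\le\min\Big\{\max_{1\le i\le n}\{|f_{ii}|+\hat r_i(F)\},\ \max_{1\le i\le n}\{|g_{ii}|+\hat r_i(G)\}\Big\}.$$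
   Context: For a real $n\times n$ matrix $M=[m_{ij}]$ and index $i$, let $y_1\ge\dots\ge y_n$ be the non-increasing rearrangement of the $i$-th column of $M$ with its diagonal entry replaced by $0$, i.e. of $m_{1i},\dots,m_{i-1,i},0,m_{i+1,i},\dots,m_{ni}$. Define $\hat r_i(M)=\sum_{t=1}^{(n-1)/2}y_t-\sum_{t=(n+3)/2}^{n}y_t$ if $n$ is odd and $\hat r_i(M)=\sum_{t=1}^{n/2}y_t-\sum_{t=n/2+1}^{n}y_t$ if $n$ is even (the radius of the Gershgorin disc of the second type obtained from the $i$-th column of $M$). ''The $t$-th largest element'' of a list refers to the $t$-th entry of the list sorted in non-increasing order (with repetitions). *)

From HB Require Import structures.
From mathcomp Require Import all_boot all_order all_algebra.
From mathcomp Require Import reals.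
From mathcomp Require Import complex.
Set Implicit Arguments. Unset Strict Implicit. Unset Printing Implicit Defensive.
Import Order.TTheory GRing.Theory Num.Theory.
Local Open Scope ring_scope.

Definition sort_dec (R : realDomainType) (s : seq R) : seq R :=
  sort (fun x y : R => y <= x) s.

Definition col0 (R : realDomainType) (n : nat) (M : 'M[R]_n) (i : 'I_n) : seq R :=
  [seq (if j == i then 0 else M j i) | j <- enum 'I_n].

(* hat r_i(M): with y_1 >= ... >= y_n the sorted list (0-based list s),
   odd n : sum_{t=1}^{(n-1)/2} y_t - sum_{t=(n+3)/2}^{n} y_t
   even n: sum_{t=1}^{n/2} y_t - sum_{t=n/2+1}^{n} y_t
   In both cases: first n./2 entries minus the last n./2 entries. *)
Definition rhat (R : realDomainType) (n : nat) (M : 'M[R]_n) (i : 'I_n) : R :=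
  let s := sort_dec (col0 M i) in
  \sum_(x <- take n./2 s) x - \sum_(x <- drop (n - n./2) s) x.

(* The t-th largest (t >= 1, with repetitions) element among the
   off-diagonal entries b_{1j},...,b_{j-1,j},b_{j+1,j},...,b_{nj} of column j. *)
Definition kth_largest_offdiag (R : realDomainType) (n : nat) (M : 'M[R]_n)
    (j : 'I_n) (t : nat) : R :=
  nth 0 (sort_dec [seq M k j | k <- enum 'I_n & k != j]) t.-1.

Definition gersh2_bound2 (R : realDomainType) (n : nat) (D M : 'M[R]_n) : R :=
  \big[Num.max/0]_(i < n) (`|D i i| + rhat M i).

Definition gersh2_bound (R : realDomainType) (n : nat) (M : 'M[R]_n) : R :=
  gersh2_bound2 M M.

From Pilot Require Import Defs.
From HB Require Import structures.
From mathcomp Require Import all_boot all_order all_algebra.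
From mathcomp Require Import reals.
From mathcomp Require Import complex.
From mathcomp Require Import zify lra.
Import Order.TTheory GRing.Theory Num.Theory.
Local Open Scope ring_scope.

(* If [w] is a left eigenvector of [A] for [lambda != lambda1], then [w] is
   orthogonal to the right eigenvector [v], so [u = w S] is a left eigenvector of
   [B = S^-1 A S] whose entries sum to zero.  At an index [j] where [|u_j|] is
   maximal, [(lambda - b_jj) u_j = sum_i u_i (y_i - t)] for every real [t], where
   [y] is the [j]-th column of [B] with its diagonal entry replaced by [0]; hence
   [|lambda - b_jj| <= sum_i |y_i - t|], which equals [rhat_j(B)] when [t] is a
   median of [y].  Since [u] sums to zero it is also a left eigenvector of every
   column shift [b_ij - c_j] of [B], which gives the refined bounds. *)

Section Median.
Context {R : realDomainType}.

Lemma sum_abs_sub_median {s : seq R} :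
  sorted (fun x y => y <= x) s ->
  \sum_(x <- s) `|x - nth 0 s (size s)./2|
    = \sum_(x <- take (size s)./2 s) x - \sum_(x <- drop (size s - (size s)./2) s) x.
Proof.
move=> s_sorted; set n := size s; set k := n./2; set t := nth 0 s k.
have n_split : (odd n + k + k = n)%N by rewrite -addnA addnn odd_double_half.
have le_nth := sorted_leq_nth (fun b a c (ba : b <= a) (cb : c <= b) => le_trans cb ba)
  (fun a => lexx a) 0 s_sorted.
have ge_t x : x \in take k s -> t <= x.
  case/(nthP 0) => i; rewrite size_takel => [ltik <-|]; last by rewrite -/n; lia.
  by rewrite nth_take //; apply: le_nth; rewrite ?inE /= -/n; lia.
have le_t x : x \in drop k s -> x <= t.
  case/(nthP 0) => i; rewrite size_drop -/n => ltin <-.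
  by rewrite nth_drop; apply: le_nth; rewrite ?inE /= -/n; lia.
rewrite -[in LHS](cat_take_drop k s) big_cat /=.
rewrite (eq_big_seq (fun x => x - t)); last first.
  by move=> x /ge_t tx; rewrite ger0_norm // subr_ge0.
rewrite [X in _ + X](eq_big_seq (fun x => t - x)); last first.
  by move=> x /le_t xt; rewrite distrC ger0_norm // subr_ge0.
rewrite !sumrB !big_const_seq !count_predT !iter_addr_0 size_drop size_takel -/n;
  last by lia.
case: (boolP (odd n)) => n_odd; rewrite ?n_odd ?(negbTE n_odd) /= in n_split.
  rewrite (_ : (n - k = k.+1)%N); last by lia.
  rewrite (drop_nth 0) -/t ?big_cons ?mulrS; [lra | rewrite -/n; lia].
by rewrite (_ : (n - k = k)%N); [lra | lia].
Qed.

(* [Defs.col0] is qualified because [matrix] exports a lemma named [col0]. *)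
Definition col_median {n : nat} (M : 'M[R]_n) (j : 'I_n) : R :=
  nth 0 (sort_dec (Defs.col0 M j)) n./2.

Lemma rhat_sum_abs_sub_median {n} (M : 'M[R]_n) j :
  rhat M j = \sum_i `|(if i == j then 0 else M i j) - col_median M j|.
Proof.
have size_col : size (sort_dec (Defs.col0 M j)) = n.
  by rewrite size_sort size_map size_enum_ord.
have := sum_abs_sub_median (sort_sorted (fun x y => le_total y x) (Defs.col0 M j)).
rewrite size_col /rhat => /esym ->.
by rewrite (perm_big _ (permEl (perm_sort _ _))) /Defs.col0 big_map big_enum.
Qed.

End Median.

Lemma gersh2_bound2_eq_diag (R : realDomainType) n (D M : 'M[R]_n) :
  (forall i, D i i = M i i) -> gersh2_bound2 D M = gersh2_bound M.
Proof. by move=> eq_diag; apply: eq_bigr => i _; rewrite eq_diag. Qed.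

Local Open Scope complex_scope.

Lemma normc_real (R : rcfType) (x : R) : `|x%:C| = `|x|%:C.
Proof. by rewrite normc_def /= expr0n /= addr0 sqrtr_sqr. Qed.

Section ZeroSumLeftEigenvector.
Context {R : rcfType} {n : nat} {M : 'M[R]_n} {u : 'rV[R[i]]_n} {l : R[i]}.
Hypotheses (u_eig : u *m map_mx (real_complex R) M = l *: u)
           (u_sum0 : \sum_i u 0 i = 0).

Lemma zero_sum_left_eigen_entry j (t : R) :
  (l - (M j j)%:C) * u 0 j
    = \sum_i u 0 i * ((if i == j then 0 else M i j) - t)%:C.
Proof.
have /rowP/(_ j) := u_eig; rewrite !mxE => eig_j.
under eq_bigr => i _ do rewrite rmorphB mulrBr.
rewrite sumrB -big_distrl /= u_sum0 mul0r subr0 (bigD1 j) //= eqxx mulr0 add0r.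
rewrite mulrBl -eig_j (bigD1 j) //= mxE [_ * u 0 j]mulrC addrAC subrr add0r.
by apply: eq_bigr => i /negbTE ->; rewrite mxE.
Qed.

Lemma zero_sum_left_eigen_max_entry j (t : R) :
  u 0 j != 0 -> (forall i, `|u 0 i| <= `|u 0 j|) ->
  `|l - (M j j)%:C| <= (\sum_i `|(if i == j then 0 else M i j) - t|)%:C.
Proof.
move=> uj_neq0 uj_max; rewrite -(ler_pM2r (_ : 0 < `|u 0 j|)) ?normr_gt0 //.
rewrite -normrM (zero_sum_left_eigen_entry j t) rmorph_sum mulr_suml.
apply: le_trans (ler_norm_sum _ _ _) _; apply: ler_sum => i _.
by rewrite normrM normc_real mulrC ler_wpM2l ?ler0c.
Qed.

Hypothesis u_neq0 : u != 0.

Lemma zero_sum_left_eigenvalue_le_gersh2 : `|l| <= (gersh2_bound M)%:C.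
Proof.
have [i0 ui0_neq0] := rV0Pn _ u_neq0.
have [j _ uj_max] := @real_arg_maxP _ _ i0 xpredT (fun i => `|u 0 i|) isT
  (fun i _ => normr_real _).
have uj_neq0 : u 0 j != 0.
  by rewrite -normr_gt0 (lt_le_trans _ (uj_max i0 isT)) ?normr_gt0.
apply: (le_trans (y := (`|M j j| + rhat M j)%:C)); last first.
  by rewrite lecR; exact: (le_bigmax _ (fun i => `|M i i| + rhat M i) j).
rewrite -[l](subrK (M j j)%:C) addrC rmorphD /= -normc_real.
apply: le_trans (ler_normD _ _) _; rewrite lerD2l rhat_sum_abs_sub_median.
exact: zero_sum_left_eigen_max_entry (fun i => uj_max i isT).
Qed.

End ZeroSumLeftEigenvector.

Lemma mulmx_sub_col_const (T : pzRingType) m n (u : 'rV[T]_m) (M : 'M[T]_(m, n))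
    (c : 'I_n -> T) :
  \sum_i u 0 i = 0 -> u *m \matrix_(i, j) (M i j - c j) = u *m M.
Proof.
move=> u_sum0; apply/rowP => j; rewrite !mxE.
under eq_bigr => i _ do rewrite mxE mulrBr.
by rewrite sumrB -big_distrl /= u_sum0 mul0r subr0.
Qed.

Section DiagonalSimilarity.
Context {F : fieldType} {n : nat} {d : 'rV[F]_n}.
Hypothesis d_neq0 : forall i, d 0 i != 0.

Lemma diag_mx_unit : diag_mx d \in unitmx.
Proof. by rewrite unitmxE det_diag unitfE; apply/prodf_neq0 => i _. Qed.

Lemma diag_mx_conj_diag (A : 'M[F]_n) i :
  (invmx (diag_mx d) *m A *m diag_mx d) i i = A i i.
Proof.
set B := invmx _ *m _ *m _.
have : diag_mx d *m B = A *m diag_mx d.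
  by rewrite !mulmxA mulmxV ?diag_mx_unit ?mul1mx.
move/matrixP/(_ i i); rewrite mul_diag_mx mul_mx_diag !mxE mulrC.
exact: mulIf.
Qed.

End DiagonalSimilarity.

Lemma sum_mul_diag_mx (T : comPzRingType) n (w : 'rV[T]_n) (d : 'cV[T]_n) :
  \sum_i (w *m diag_mx d^T) 0 i = (w *m d) 0 0.
Proof. by rewrite mxE; apply: eq_bigr => i _; rewrite mul_mx_diag !mxE. Qed.

Lemma left_eigen_conj {F : fieldType} {n} {A S : 'M[F]_n} {w : 'rV[F]_n} {a} :
  S \in unitmx -> w *m A = a *: w ->
  (w *m S) *m (invmx S *m A *m S) = a *: (w *m S).
Proof. by move=> S_unit w_eig; rewrite !mulmxA mulmxK // w_eig scalemxAl. Qed.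

Lemma left_right_eigen_orthogonal {F : fieldType} {n} {A : 'M[F]_n} {w : 'rV[F]_n}
    {v : 'cV[F]_n} {a b} :
  w *m A = a *: w -> A *m v = b *: v -> a != b -> w *m v = 0.
Proof.
move=> w_eig v_eig a_neq_b; apply/eqP.
have : a *: (w *m v) = b *: (w *m v).
  by rewrite [LHS]scalemxAl -w_eig -mulmxA v_eig -scalemxAr.
by move/eqP; rewrite -subr_eq0 -scalerBl scaler_eq0 subr_eq0 (negbTE a_neq_b).
Qed.

Theorem theorem8 (R : realType) (n : nat) (A : 'M[R]_n) (lambda1 : R)
    (v : 'cV[R]_n) (lambda : R[i]) :
  A *m v = lambda1 *: v ->
  (forall k : 'I_n, v k 0 != 0) ->
  eigenvalue (map_mx (real_complex R) A) lambda ->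
  lambda != (lambda1%:C)%C ->
  let S := diag_mx v^T in
  let B := invmx S *m A *m S in
  [/\ `|lambda| <= (gersh2_bound2 A B)%:C%C,
      ~~ odd n ->
        let F := \matrix_(i < n, j < n)
                   (B i j - kth_largest_offdiag B j n./2) in
        `|lambda| <= (gersh2_bound F)%:C%C
    & odd n -> (3 <= n)%N ->
        let F := \matrix_(i < n, j < n)
                   (B i j - kth_largest_offdiag B j (n.-1)./2) in
        let G := \matrix_(i < n, j < n)
                   (B i j - kth_largest_offdiag B j (n.+1)./2) in
        `|lambda| <= (Num.min (gersh2_bound F) (gersh2_bound G))%:C%C].
Proof.
move=> v_eig v_neq0 /eigenvalueP[w w_eig w_neq0] lambda_neq S B.
set f := real_complex R.
have vT_neq0 i : v^T 0 i != 0 by rewrite mxE.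
have S_unit : map_mx f S \in unitmx by rewrite map_unitmx (diag_mx_unit vT_neq0).
set u := w *m map_mx f S.
have u_eig : u *m map_mx f B = lambda *: u.
  by rewrite /B !map_mxM map_invmx (left_eigen_conj S_unit w_eig).
have u_neq0 : u != 0 by rewrite mulmx_free_eq0 ?row_free_unit.
have u_sum0 : \sum_i u 0 i = 0.
  have vC_eig : map_mx f A *m map_mx f v = f lambda1 *: map_mx f v.
    by rewrite -map_mxM v_eig map_mxZ.
  rewrite /u map_diag_mx -map_trmx sum_mul_diag_mx.
  by rewrite (left_right_eigen_orthogonal w_eig vC_eig lambda_neq) mxE.
have shifted_bound c : `|lambda| <= (gersh2_bound (\matrix_(i, j) (B i j - c j)))%:C.
  apply: (zero_sum_left_eigenvalue_le_gersh2 _ u_sum0 u_neq0).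
  have -> : map_mx f (\matrix_(i, j) (B i j - c j))
          = \matrix_(i, j) (map_mx f B i j - f (c j)).
    by apply/matrixP => i j; rewrite !mxE /f rmorphB.
  by rewrite mulmx_sub_col_const.
split=> [|_|_ _ /=].
- rewrite gersh2_bound2_eq_diag => [|i]; last by rewrite (diag_mx_conj_diag vT_neq0).
  exact: zero_sum_left_eigenvalue_le_gersh2 u_eig u_sum0 u_neq0.
- exact: shifted_bound.
- by rewrite minEle; case: ifP => _; apply: shifted_bound.
Qed.
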